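(* Let $\phi$ be an escort, let $\Delta^{n}_{\circ}=\{x\in\mathbb{R}^n : x_i>0,\ \sum_i x_i=1\}$ be the interior of the probability simplex, and equip $\Delta^n_\circ$ with the escort metric $g^{\phi}_{ij}(x)=\frac{1}{\phi(x_i)}\delta_{ij}$, i.e. $\langle u,w\rangle_x=\sum_{i}\frac{1}{\phi(x_i)}u_iw_i$ for tangent vectors $u,w$ (vectors with $\sum_i u_i=\sum_i w_i=0$). Let $V$ be a $C^1$ function on an open neighbourhood of $\Delta^n_\circ$ in $\mathbb{R}^n$ and let $f=\nabla V$ be its Euclidean gradient. Define $\hat f_{\phi}(x)$ by \[\hat f_{\phi,i}(x)=\phi(x_i)\left(f_i(x)-\mathbb{E}^{\phi}_{x}[f(x)]\right),\qquad i=1,\dots,n.\] Then $\hat f_\phi$ is the gradient of $V|_{\Delta^n_\circ}$ with respect to the escort metric: for every $x\in\Delta^n_\circ$, $\hat f_\phi(x)$ is a tangent vector (i.e. $\sum_i \hat f_{\phi,i}(x)=0$) and $\langle \hat f_\phi(x), z\rangle_x = D_xV(z)$ for every $z\in\mathbb{R}^n$ with $\sum_i z_i=0$.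
   Context: An escort is a continuous function $\phi$ that is strictly positive on $(0,1]$. For $x=(x_1,\dots,x_n)$ the partition function is $Z_\phi(x)=\sum_{i=1}^n\phi(x_i)$, and for a vector $f\in\mathbb{R}^n$ the escort expectation is $\mathbb{E}^{\phi}_{x}[f]=\frac{1}{Z_\phi(x)}\sum_{i=1}^n\phi(x_i)f_i$. *)

From HB Require Import structures.
From mathcomp Require Import all_boot all_order all_algebra.
From mathcomp Require Import all_classical all_reals all_analysis.
Set Implicit Arguments. Unset Strict Implicit. Unset Printing Implicit Defensive.
Import Order.TTheory GRing.Theory Num.Theory.
Import numFieldNormedType.Exports.
Local Open Scope classical_set_scope.
Local Open Scope ring_scope.

Definition escort (R : realType) (phi : R -> R) : Prop :=
  {within `[0, 1]%classic, continuous phi} /\ (forall t : R, 0 < t <= 1 -> 0 < phi t).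

Definition Zphi (R : realType) (n : nat) (phi : R -> R) (x : 'rV[R]_n) : R :=
  \sum_(i < n) phi (x 0 i).

Definition escortE (R : realType) (n : nat) (phi : R -> R) (x f : 'rV[R]_n) : R :=
  (Zphi phi x)^-1 * \sum_(i < n) phi (x 0 i) * f 0 i.

Definition simplex_int (R : realType) (n : nat) : set 'rV[R]_n :=
  [set x | (forall i, 0 < x 0 i) /\ \sum_(i < n) x 0 i = 1].

Definition tangent (R : realType) (n : nat) (u : 'rV[R]_n) : Prop :=
  \sum_(i < n) u 0 i = 0.

Definition escort_inner (R : realType) (n : nat) (phi : R -> R) (x u w : 'rV[R]_n) : R :=
  \sum_(i < n) (phi (x 0 i))^-1 * u 0 i * w 0 i.

Definition egrad (R : realType) (n : nat) (V : 'rV[R]_n -> R) (x : 'rV[R]_n) : 'rV[R]_n :=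
  \row_(i < n) ('d V x (delta_mx 0 i : 'rV[R]_n) : R).

Definition fhat (R : realType) (n : nat) (phi : R -> R) (f : 'rV[R]_n -> 'rV[R]_n)
  (x : 'rV[R]_n) : 'rV[R]_n :=
  \row_(i < n) (phi (x 0 i) * (f x 0 i - escortE phi x (f x))).

Definition C1_on (R : realType) (n : nat) (U : set 'rV[R]_n) (V : 'rV[R]_n -> R) : Prop :=
  (forall x, U x -> differentiable V x) /\
  (forall i : 'I_n, {within U, continuous (fun x => ('d V x (delta_mx 0 i : 'rV[R]_n) : R))}).

From HB Require Import structures.
From mathcomp Require Import all_boot all_order all_algebra.
From mathcomp Require Import all_classical all_reals all_analysis.
Import Order.TTheory GRing.Theory Num.Theory.
Import numFieldNormedType.Exports.
Local Open Scope classical_set_scope.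
Local Open Scope ring_scope.

(* The escort weights phi(x_i) are positive on the open simplex, so the
   correction term phi(x_i) E^phi_x[f] of fhat has total mass Z E^phi_x[f],
   which cancels the mass of phi(x_i) f_i: fhat is tangent.  Pairing fhat
   with z in the escort metric cancels the weights 1/phi(x_i), leaving
   sum_i f_i z_i minus a multiple of sum_i z_i = 0, and sum_i f_i z_i is the
   differential of V applied to z. *)

Lemma linear_row_sum (K : comNzRingType) (n : nat)
    (L : {linear 'rV[K]_n -> K^o}) (z : 'rV[K]_n) :
  L z = \sum_(i < n) L 'e_i * z 0 i.
Proof.
rewrite {1}(row_sum_delta z) linear_sum.
by apply: eq_bigr => i _; rewrite linearZ mulrC.
Qed.

Section EscortGradient.
Variables (R : realType) (n : nat).
Implicit Types (phi : R -> R) (x z : 'rV[R]_n).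

Lemma simplex_int_le1 x i : simplex_int x -> x 0 i <= 1.
Proof.
move=> [x_gt0 <-]; rewrite (bigD1 i) //= lerDl.
by apply: sumr_ge0 => j _; apply: ltW.
Qed.

Lemma simplex_int_dim_gt0 x : simplex_int x -> (0 < n)%N.
Proof.
case: n x => [|//] x [_]; rewrite big_ord0 => /eqP.
by rewrite eq_sym oner_eq0.
Qed.

Lemma escort_simplex_gt0 phi x i : escort phi -> simplex_int x -> 0 < phi (x 0 i).
Proof.
move=> [_ phi_gt0] xS; apply: phi_gt0.
by rewrite simplex_int_le1 // andbT; case: xS.
Qed.

Lemma Zphi_gt0 phi x : (0 < n)%N -> (forall i, 0 < phi (x 0 i)) -> 0 < Zphi phi x.
Proof.
move=> n_gt0 phix_gt0; rewrite /Zphi (bigD1 (Ordinal n_gt0)) //=.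
by rewrite ltr_pwDl // sumr_ge0 // => j _; apply: ltW.
Qed.

Lemma fhat_tangent phi (f : 'rV[R]_n -> 'rV[R]_n) x :
  Zphi phi x != 0 -> tangent (fhat phi f x).
Proof.
move=> Z_neq0; rewrite /tangent /fhat.
under eq_bigr => i _ do rewrite mxE mulrBr.
by rewrite sumrB /escortE -mulr_suml -/(Zphi phi x) mulrA mulfV // mul1r subrr.
Qed.

Lemma escort_inner_fhat phi (f : 'rV[R]_n -> 'rV[R]_n) x z :
  (forall i, phi (x 0 i) != 0) -> tangent z ->
  escort_inner phi x (fhat phi f x) z = \sum_(i < n) f x 0 i * z 0 i.
Proof.
move=> phix_neq0 z_tangent; rewrite /escort_inner /fhat.
under eq_bigr => i _ do rewrite mxE mulrA mulVf // mul1r mulrBl.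
by rewrite sumrB -mulr_sumr z_tangent mulr0 subr0.
Qed.

(* ['d V x] is a linear map even where V is not differentiable, so no
   regularity of V is needed here. *)
Lemma diff_egrad (V : 'rV[R]_n -> R) x z :
  'd V x z = \sum_(i < n) egrad V x 0 i * z 0 i.
Proof.
by rewrite linear_row_sum; apply: eq_bigr => i _; rewrite mxE.
Qed.

End EscortGradient.

Theorem mainTheorem1 (R : realType) (n : nat) (phi : R -> R)
  (U : set 'rV[R]_n) (V : 'rV[R]_n -> R) :
  escort phi ->
  open U -> @simplex_int R n `<=` U ->
  C1_on U V ->
  forall x : 'rV[R]_n, @simplex_int R n x ->
    tangent (fhat phi (egrad V) x) /\
    (forall z : 'rV[R]_n, tangent z ->
       escort_inner phi x (fhat phi (egrad V) x) z = ('d V x z : R)).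
Proof.
move=> phi_escort _ _ _ x xS.
have phix_gt0 i : 0 < phi (x 0 i) by exact: escort_simplex_gt0.
split.
  by apply/fhat_tangent/lt0r_neq0/Zphi_gt0 => //; exact: simplex_int_dim_gt0 xS.
move=> z z_tangent.
rewrite escort_inner_fhat ?diff_egrad // => i.
exact: lt0r_neq0.
Qed.
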